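(* Let $\mathcal{H}$ be a separable Hilbert space and $\{f_n\}_{n=1}^\infty$ a Bessel sequence in $\mathcal{H}$. Then $\{f_n\}$ is a pseudo-Riesz basis for $\mathcal{H}$ if and only if it is simultaneously a pseudo-frame and a pseudo-Riesz sequence.
   Context: A Bessel sequence $\{f_n\}$ in $\mathcal{H}$ is a pseudo-Riesz basis if there are a finite set $\sigma\subseteq\mathbb{N}$ and finitely many vectors $g_1,\dots,g_m\in\mathcal{H}$ such that $\{f_n\}_{n\notin\sigma}\cup\{g_1,\dots,g_m\}$ is a Riesz basis for $\mathcal{H}$. A Bessel sequence is a pseudo-frame if it becomes a frame for $\mathcal{H}$ after adding finitely many appropriate vectors to it. A Bessel sequence is a pseudo-Riesz sequence if it becomes a Riesz sequence after removing finitely many appropriate vectors from it. *)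

From HB Require Import structures.
From mathcomp Require Import all_boot all_order all_algebra.
From mathcomp Require Import all_classical all_reals.
From mathcomp Require Import ereal esum.
From mathcomp.real_closed Require Import complex.

Set Implicit Arguments.
Unset Strict Implicit.
Unset Printing Implicit Defensive.

Import Order.TTheory GRing.Theory Num.Theory.
Local Open Scope ring_scope.
Local Open Scope classical_set_scope.

Section Hilbert.
Variables (R : realType) (V : lmodType R[i]) (ip : V -> V -> R[i]).

Definition inner_product : Prop :=
  [/\ (forall (a : R[i]) (x y z : V), ip (a *: x + y) z = a * ip x z + ip y z),
      (forall x y : V, ip y x = conjc (ip x y)),
      (forall x : V, 0 <= complex.Re (ip x x)) &
      (forall x : V, ip x x = 0 -> x = 0)].

Definition hnorm (x : V) : R := Num.sqrt (complex.Re (ip x x)).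

Definition csq (z : R[i]) : R := (Normc.normc z) ^+ 2.

Definition hcomplete : Prop :=
  forall u : nat -> V,
    (forall e : R, 0 < e -> exists N : nat, forall m n : nat,
         (N <= m)%N -> (N <= n)%N -> hnorm (u m - u n) < e) ->
    exists l : V, forall e : R, 0 < e -> exists N : nat, forall n : nat,
         (N <= n)%N -> hnorm (u n - l) < e.

Definition hseparable : Prop :=
  exists d : nat -> V, forall (x : V) (e : R), 0 < e ->
    exists n : nat, hnorm (x - d n) < e.

Section Families.
Variable I : choiceType.
Implicit Types (f : I -> V).

Definition lincomb f (s : seq I) (c : I -> R[i]) : V :=
  \sum_(i <- s) c i *: f i.

Definition coef_sum f (x : V) : \bar R :=
  \esum_(i in [set: I]) (csq (ip x (f i)))%:E.

Definition bessel f : Prop :=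
  exists B : R, 0 < B /\
    forall x : V, (coef_sum f x <= (B * hnorm x ^+ 2)%:E)%E.

Definition frame f : Prop :=
  exists A B : R, [/\ 0 < A, 0 < B &
    forall x : V, ((A * hnorm x ^+ 2)%:E <= coef_sum f x)%E /\
                  (coef_sum f x <= (B * hnorm x ^+ 2)%:E)%E].

Definition riesz_sequence f : Prop :=
  exists A B : R, [/\ 0 < A, 0 < B &
    forall (s : seq I) (c : I -> R[i]), uniq s ->
      A * (\sum_(i <- s) csq (c i)) <= hnorm (lincomb f s c) ^+ 2 /\
      hnorm (lincomb f s c) ^+ 2 <= B * (\sum_(i <- s) csq (c i))].

Definition complete_family f : Prop :=
  forall (x : V) (e : R), 0 < e ->
    exists (s : seq I) (c : I -> R[i]), hnorm (x - lincomb f s c) < e.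

Definition riesz_basis f : Prop := complete_family f /\ riesz_sequence f.

End Families.

Definition remove_add (f : nat -> V) (sigma : seq nat) (m : nat) (g : 'I_m -> V)
  : {n : nat | n \notin sigma} + 'I_m -> V :=
  fun i => match i with inl n => f (sval n) | inr k => g k end.

Definition add_vecs (f : nat -> V) (m : nat) (g : 'I_m -> V) : nat + 'I_m -> V :=
  fun i => match i with inl n => f n | inr k => g k end.

Definition remove_vecs (f : nat -> V) (sigma : seq nat) : {n : nat | n \notin sigma} -> V :=
  fun n => f (sval n).

Definition pseudo_riesz_basis (f : nat -> V) : Prop :=
  exists (sigma : seq nat) (m : nat) (g : 'I_m -> V),
    riesz_basis (@remove_add f sigma m g).

Definition pseudo_frame (f : nat -> V) : Prop :=
  exists (m : nat) (g : 'I_m -> V), frame (@add_vecs f m g).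

Definition pseudo_riesz_sequence (f : nat -> V) : Prop :=
  exists sigma : seq nat, riesz_sequence (@remove_vecs f sigma).

End Hilbert.

(* A Riesz basis with lower Riesz bound [a] is a frame with lower bound [a/4]:
   for a finite combination [y] of the basis vectors the lower Riesz bound gives
   [a ||y||^2 <= sum_i |<y, f_i>|^2], and a general [x] is approximated by such
   [y].  Adding back the finitely many removed vectors keeps a frame, the
   Bessel bound of [f] paying for the added ones, and dropping the added
   vectors leaves a Riesz sequence.
   Conversely, let [{f_n}_{n \notin sigma}] be a Riesz sequence with closed
   span [W] and [{f_n} u {g_k}] a frame.  Project the finitely many vectors
   [f_n] ([n \in sigma]) and [g_k] onto the orthogonal complement of [W] and
   orthonormalise the projections by Gram-Schmidt into [e_1, ..., e_r].  Then
   [{f_n}_{n \notin sigma} u {e_k}] is a Riesz sequence, as an orthogonal sum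
   of two Riesz sequences, and it is complete: its closed span contains every
   [f_n] and [g_k], whose span is dense since a frame is complete.  Orthogonal
   projections onto closed spans are limits of minimising sequences, which are
   Cauchy by the parallelogram law. *)

From Pilot Require Import Defs.
From mathcomp Require Import all_boot all_order all_algebra.
From mathcomp Require Import all_classical all_reals.
From mathcomp Require Import ereal esum.
From mathcomp.real_closed Require Import complex.
From mathcomp Require Import ring lra.

Set Implicit Arguments.
Unset Strict Implicit.
Unset Printing Implicit Defensive.

Import Order.TTheory GRing.Theory Num.Theory.
Local Open Scope ring_scope.
Local Open Scope complex_scope.
Local Open Scope classical_set_scope.

Lemma csqE (R : realType) (a b : R) : csq (a +i* b) = a ^+ 2 + b ^+ 2.
Proof. by rewrite /csq /= sqr_sqrtr // addr_ge0 // sqr_ge0. Qed.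

Lemma csq_ge0 (R : realType) (z : R[i]) : 0 <= csq z.
Proof. by case: z => a b; rewrite csqE addr_ge0 // sqr_ge0. Qed.

Lemma csqR (R : realType) (x : R) : csq x%:C = x ^+ 2.
Proof. by rewrite csqE expr0n addr0. Qed.

Lemma csqD_le (R : realType) (p q : R[i]) : csq (p + q) <= 2 * csq p + 2 * csq q.
Proof.
case: p => p1 p2; case: q => q1 q2; simpc; rewrite !csqE.
have := sqr_ge0 (p1 - q1); have := sqr_ge0 (p2 - q2); nra.
Qed.

Lemma Re_conjM_self (R : realType) (d : R[i]) : complex.Re (conjc d * d) = csq d.
Proof. by case: d => d1 d2; rewrite csqE /=; ring. Qed.

Lemma csq_eq0 (R : realType) (z : R[i]) : csq z = 0 -> z = 0.
Proof. by move/eqP; rewrite sqrf_eq0 => /eqP/Normc.eq0_normc. Qed.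

Lemma Re_sqr_le_csq (R : realType) (w : R[i]) : complex.Re w ^+ 2 <= csq w.
Proof. by case: w => w1 w2; rewrite csqE lerDl sqr_ge0. Qed.

Lemma Re_conjM_le (R : realType) (a : R) (c d : R[i]) :
  2 * a * complex.Re (conjc c * d) <= a ^+ 2 * csq c + csq d.
Proof.
case: c => c1 c2; case: d => d1 d2; simpc; rewrite !csqE /=.
have := sqr_ge0 (a * c1 - d1); have := sqr_ge0 (a * c2 - d2); nra.
Qed.

Section EsumSeq.
Variables (R : realType) (I : choiceType).

Lemma sum_seq_le_esum (F : I -> R) (s : seq I) : uniq s ->
  ((\sum_(i <- s) F i)%:E <= \esum_(i in [set: I]) (F i)%:E)%E.
Proof.
move=> us; apply: esum_ge; exists [set` s]; first by split.
by rewrite -fsbig_seq // sumEFin.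
Qed.

Lemma esum_le_of_sum_seq (F : I -> R) (M : \bar R) :
  (forall s : seq I, uniq s -> ((\sum_(i <- s) F i)%:E <= M)%E) ->
  (\esum_(i in [set: I]) (F i)%:E <= M)%E.
Proof.
move=> H; apply: ge_ereal_sup => _ [X [finX _] <-].
by rewrite fsbig_finite // sumEFin H // finmap.fset_uniq.
Qed.

End EsumSeq.

Section SumSplit.
Variables (J K : Type).

Definition lefts (s : seq (J + K)) : seq J :=
  pmap (fun x => if x is inl j then Some j else None) s.
Definition rights (s : seq (J + K)) : seq K :=
  pmap (fun x => if x is inr k then Some k else None) s.

Lemma big_sum_split (M : nmodType) (F : J + K -> M) s :
  \sum_(x <- s) F x = \sum_(j <- lefts s) F (inl j) + \sum_(k <- rights s) F (inr k).
Proof.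
elim: s => [|[j|k] s IH]; first by rewrite !big_nil addr0.
  by rewrite /lefts /rights /= !big_cons IH addrA.
by rewrite /lefts /rights /= !big_cons IH addrCA.
Qed.

End SumSplit.

Lemma uniq_lefts (J K : eqType) (s : seq (J + K)) : uniq s -> uniq (lefts s).
Proof. by apply: (pmap_uniq (g := @inl J K)) => -[]. Qed.

Lemma uniq_rights (J K : eqType) (s : seq (J + K)) : uniq s -> uniq (rights s).
Proof. by apply: (pmap_uniq (g := @inr J K)) => -[]. Qed.

Lemma ler_sum_uniq (R : numDomainType) (T : finType) (G : T -> R) (s : seq T) :
  (forall k, 0 <= G k) -> uniq s -> \sum_(k <- s) G k <= \sum_k G k.
Proof.
move=> G0 us; rewrite big_uniq // [leRHS]big_mkcond [leLHS]big_mkcond /=.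
by apply: ler_sum => k _; case: ifP.
Qed.

Lemma invSn_lt (R : archiRealFieldType) (eta : R) : 0 < eta ->
  exists N : nat, forall n : nat, (N <= n)%N -> (n.+1%:R : R)^-1 < eta.
Proof.
move=> e0; exists (Num.truncn eta^-1) => n Hn.
rewrite -[eta]invrK ltf_pV2 ?posrE ?invr_gt0 //.
by apply: lt_le_trans (truncnS_gt _) _; rewrite ler_nat ltnS.
Qed.

Definition join_fam (V I K : Type) (F : I -> V) (G : K -> V) (x : I + K) : V :=
  match x with inl i => F i | inr k => G k end.

(** * Inner product spaces *)

Section InnerProduct.
Variables (R : realType) (V : lmodType R[i]) (ip : V -> V -> R[i]).
Hypothesis Hip : inner_product ip.

Definition sqnorm (x : V) : R := complex.Re (ip x x).

Lemma ipDl x y z : ip (x + y) z = ip x z + ip y z.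
Proof. by case: Hip => H _ _ _; rewrite -[x in LHS]scale1r H mul1r. Qed.

Lemma ip0l z : ip 0 z = 0.
Proof. by apply/(addrI (ip 0 z)); rewrite -ipDl !addr0. Qed.

Lemma ipZl a x z : ip (a *: x) z = a * ip x z.
Proof. by case: Hip => H _ _ _; rewrite -[_ *: x]addr0 H ip0l addr0. Qed.

Lemma ipNl x z : ip (- x) z = - ip x z.
Proof. by rewrite -scaleN1r ipZl mulN1r. Qed.

Lemma ipBl x y z : ip (x - y) z = ip x z - ip y z.
Proof. by rewrite ipDl ipNl. Qed.

Lemma ipC x y : ip y x = conjc (ip x y).
Proof. by case: Hip. Qed.

Lemma ipDr x y z : ip x (y + z) = ip x y + ip x z.
Proof. by rewrite ipC ipDl rmorphD /= -!ipC. Qed.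

Lemma ipZr a x y : ip x (a *: y) = conjc a * ip x y.
Proof. by rewrite ipC ipZl rmorphM /= -ipC. Qed.

Lemma ip0r x : ip x 0 = 0.
Proof. by rewrite ipC ip0l conjc0. Qed.

Lemma ipNr x z : ip x (- z) = - ip x z.
Proof. by rewrite ipC ipNl rmorphN /= -ipC. Qed.

Lemma ip_suml (I : Type) (s : seq I) (F : I -> V) z :
  ip (\sum_(i <- s) F i) z = \sum_(i <- s) ip (F i) z.
Proof. by elim/big_rec2: _ => [|i a b _ <-]; rewrite ?ip0l ?ipDl. Qed.

Lemma ip_sumr (I : Type) (s : seq I) (F : I -> V) z :
  ip z (\sum_(i <- s) F i) = \sum_(i <- s) ip z (F i).
Proof. by elim/big_rec2: _ => [|i a b _ <-]; rewrite ?ip0r ?ipDr. Qed.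

Lemma ipxx x : ip x x = (sqnorm x)%:C.
Proof.
have := ipC x x; rewrite /sqnorm; case: (ip x x) => a b /= [] Hb.
by congr Complex; lra.
Qed.

Lemma sqnorm_ge0 x : 0 <= sqnorm x.
Proof. by case: Hip => _ _ H _; apply: H. Qed.

Lemma sqnorm_eq0 x : sqnorm x = 0 -> x = 0.
Proof. by case: Hip => _ _ _ H E; apply: H; rewrite ipxx E. Qed.

Lemma sqnorm0 : sqnorm 0 = 0.
Proof. by rewrite /sqnorm ip0l. Qed.

Lemma hnorm_sqr x : hnorm ip x ^+ 2 = sqnorm x.
Proof. by rewrite /hnorm sqr_sqrtr // sqnorm_ge0. Qed.

Lemma hnorm0 : hnorm ip 0 = 0.
Proof. by rewrite /hnorm -/(sqnorm 0) sqnorm0 sqrtr0. Qed.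

Lemma hnorm_ge0 x : 0 <= hnorm ip x.
Proof. exact: sqrtr_ge0. Qed.

Lemma sqnormDZ x y a :
  sqnorm (x + a *: y) = sqnorm x + 2 * complex.Re (conjc a * ip x y) + csq a * sqnorm y.
Proof.
rewrite {1}/sqnorm ipDl !ipDr !ipZl !ipZr (ipC x y) (ipxx y) (ipxx x).
by case: a => a1 a2; case: (ip x y) => p1 p2; rewrite csqE; simpc => /=; ring.
Qed.

Lemma sqnormD x y : sqnorm (x + y) = sqnorm x + 2 * complex.Re (ip x y) + sqnorm y.
Proof.
have := sqnormDZ x y 1; rewrite scale1r => ->.
by rewrite conjc1 mul1r [csq 1]csqE expr1n expr0n addr0 mul1r.
Qed.

Lemma sqnormZ a y : sqnorm (a *: y) = csq a * sqnorm y.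
Proof. by rewrite -[a *: y]add0r sqnormDZ sqnorm0 ip0l mulr0 /= mulr0 !add0r. Qed.

Lemma sqnormN y : sqnorm (- y) = sqnorm y.
Proof. by rewrite /sqnorm ipNl ipNr opprK. Qed.

Lemma parallelogram a b :
  sqnorm (a + b) + sqnorm (a - b) = 2 * sqnorm a + 2 * sqnorm b.
Proof. by rewrite !sqnormD sqnormN ipNr; case: (ip a b) => p1 p2 /=; lra. Qed.

Lemma cauchy_schwarz x y : csq (ip x y) <= sqnorm x * sqnorm y.
Proof.
have [/sqnorm_eq0 ->|qy] := eqVneq (sqnorm y) 0.
  by rewrite ip0r sqnorm0 mulr0 csqR expr0n.
have qpos : 0 < sqnorm y by rewrite lt0r qy sqnorm_ge0.
(* expand [0 <= sqnorm (x + a y)] at the minimiser [a = - <x, y> / sqnorm y] *)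
move: (sqnorm_ge0 (x + Complex (- complex.Re (ip x y) / sqnorm y)
                               (- complex.Im (ip x y) / sqnorm y) *: y)).
rewrite sqnormDZ; case: (ip x y) => p1 p2 /=; rewrite !csqE; simpc => /= H.
set q := sqnorm y in qpos qy H *.
have E : 2 * (- (p1 / q * p1) - p2 / q * p2) +
   ((- (p1 / q)) ^+ 2 + (- (p2 / q)) ^+ 2) * q = - ((p1 ^+ 2 + p2 ^+ 2) / q).
  by field.
have : (p1 ^+ 2 + p2 ^+ 2) / q <= sqnorm x by lra.
by rewrite ler_pdivrMr.
Qed.

Lemma Re_ip_le x y : complex.Re (ip x y) <= hnorm ip x * hnorm ip y.
Proof.
have := cauchy_schwarz x y; rewrite -!hnorm_sqr.
have := hnorm_ge0 x; have := hnorm_ge0 y.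
case: (ip x y) => p1 p2; rewrite csqE /=.
set a := hnorm ip x; set b := hnorm ip y => hb ha H.
have hab : 0 <= a * b by apply: mulr_ge0.
apply: le_trans (ler_norm p1) _.
rewrite -ler_sqr ?nnegrE ?normr_ge0 // -normrX ger0_norm ?sqr_ge0 // exprMn.
have := sqr_ge0 p2; lra.
Qed.

Lemma le_hnormD x y : hnorm ip (x + y) <= hnorm ip x + hnorm ip y.
Proof.
have := sqnormD x y; rewrite -!hnorm_sqr; have := Re_ip_le x y.
have := hnorm_ge0 x; have := hnorm_ge0 y; have := hnorm_ge0 (x + y).
set a := hnorm ip x; set b := hnorm ip y; set c := hnorm ip (x + y).
move=> hc hb ha H E; nra.
Qed.

Lemma hnorm_opp x : hnorm ip (- x) = hnorm ip x.
Proof. by rewrite /hnorm -/(sqnorm _) sqnormN. Qed.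

Lemma hdistC x y : hnorm ip (x - y) = hnorm ip (y - x).
Proof. by rewrite -hnorm_opp opprB. Qed.

Lemma hnormZ a x : hnorm ip (a *: x) = Normc.normc a * hnorm ip x.
Proof.
rewrite /hnorm -!/(sqnorm _) sqnormZ sqrtrM ?csq_ge0 // /csq sqrtr_sqr.
by rewrite ger0_norm //; case: a => ? ?; apply: sqrtr_ge0.
Qed.

Lemma hnorm_lt x e : 0 < e -> (hnorm ip x < e <-> sqnorm x < e ^+ 2).
Proof.
by move=> e0; rewrite -hnorm_sqr ltr_pXn2r // ?nnegrE ?hnorm_ge0 // ltW.
Qed.

Lemma hnorm_eq0 x : hnorm ip x = 0 -> x = 0.
Proof. by move=> H; apply: sqnorm_eq0; rewrite -hnorm_sqr H expr0n. Qed.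

End InnerProduct.

(** * Closed linear spans and orthogonal projections *)

Section ClosedSpan.
Variables (R : realType) (V : lmodType R[i]) (ip : V -> V -> R[i]).
Hypothesis Hip : inner_product ip.

Section Family.
Variables (I : Type) (h : I -> V).

(* Combinations given by a list of (coefficient, index) pairs; as indices may
   repeat, unlike in [lincomb], they are closed under addition. *)
Definition comb (l : seq (R[i] * I)) : V := \sum_(p <- l) p.1 *: h p.2.

Lemma comb_cat l1 l2 : comb (l1 ++ l2) = comb l1 + comb l2.
Proof. by rewrite /comb big_cat. Qed.

Lemma combZ a l : a *: comb l = comb [seq (a * p.1, p.2) | p <- l].
Proof. by rewrite /comb big_map scaler_sumr; apply: eq_bigr => p _; rewrite scalerA. Qed.

Definition closed_span : set V :=
  [set x | forall e : R, 0 < e -> exists l, hnorm ip (x - comb l) < e].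

Lemma closed_span_comb l : closed_span (comb l).
Proof. by move=> e e0; exists l; rewrite subrr (hnorm0 Hip). Qed.

Lemma closed_span_gen i : closed_span (h i).
Proof. by have := closed_span_comb [:: (1, i)]; rewrite /comb big_seq1 scale1r. Qed.

Lemma closed_span_approx x :
  (forall e : R, 0 < e -> exists2 z, closed_span z & hnorm ip (x - z) < e) ->
  closed_span x.
Proof.
move=> H e e0; have e2 : 0 < e / 2 by lra.
have [z Hz Hxz] := H _ e2; have [l Hl] := Hz _ e2.
exists l; have -> : x - comb l = (x - z) + (z - comb l) by rewrite addrA subrK.
apply: le_lt_trans (le_hnormD Hip _ _) _; lra.
Qed.

Lemma closed_spanD x y : closed_span x -> closed_span y -> closed_span (x + y).
Proof.
move=> Hx Hy e e0; have e2 : 0 < e / 2 by lra.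
have [l1 H1] := Hx _ e2; have [l2 H2] := Hy _ e2.
exists (l1 ++ l2); rewrite comb_cat opprD addrACA.
by apply: le_lt_trans (le_hnormD Hip _ _) _; lra.
Qed.

Lemma closed_spanZ a x : closed_span x -> closed_span (a *: x).
Proof.
move=> Hx e e0; set n := Normc.normc a.
have n0 : 0 <= n by case: a @n => ? ?; apply: sqrtr_ge0.
have [l Hl] := Hx _ (divr_gt0 e0 (ltr_wpDl n0 ltr01)).
exists [seq (a * p.1, p.2) | p <- l]; rewrite -combZ -scalerBr (hnormZ Hip) -/n.
rewrite ltr_pdivlMr ?ltr_wpDl // in Hl.
by have := hnorm_ge0 ip (x - comb l); nra.
Qed.

Lemma closed_span_sum (T : Type) (s : seq T) (G : T -> V) :
  (forall t, closed_span (G t)) -> closed_span (\sum_(t <- s) G t).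
Proof.
move=> H; elim/big_ind: _ => //; last exact: closed_spanD.
by have := closed_span_comb [::]; rewrite /comb big_nil.
Qed.

End Family.

Lemma closed_span_trans (I J : Type) (h : I -> V) (k : J -> V) :
  (forall i, closed_span k (h i)) -> closed_span h `<=` closed_span k.
Proof.
move=> hk x Hx; apply: closed_span_approx => e e0.
have [l Hl] := Hx e e0; exists (comb h l) => //.
by apply: closed_span_sum => p; apply: closed_spanZ.
Qed.

Section Lincomb.
Variables (I : choiceType) (h : I -> V).

Lemma lincomb_comb s c : lincomb h s c = comb h [seq (c i, i) | i <- s].
Proof. by rewrite /comb big_map. Qed.

Lemma comb_lincomb_uniq l : exists s c, uniq s /\ comb h l = lincomb h s c.
Proof.
(* merge the coefficients of repeated indices *)
exists (undup [seq p.2 | p <- l]), (fun i => \sum_(p <- l | p.2 == i) p.1).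
split; first exact: undup_uniq.
symmetry; rewrite /lincomb /comb.
transitivity (\sum_(i <- undup [seq p.2 | p <- l]) \sum_(p <- l | p.2 == i) p.1 *: h p.2).
  by apply: eq_bigr => i _; rewrite scaler_suml; apply: eq_bigr => p /eqP ->.
rewrite (exchange_big_dep xpredT) //=; apply: eq_big_seq => p pl.
rewrite -big_filter (eq_filter (a2 := pred1 p.2)) => [|i]; last exact: eq_sym.
by rewrite filter_pred1_uniq ?undup_uniq ?mem_undup ?map_f // big_cons big_nil addr0.
Qed.

Lemma complete_familyP : complete_family ip h <-> forall x, closed_span h x.
Proof.
split=> H x e e0.
  by have [s [c Hsc]] := H x e e0; exists [seq (c i, i) | i <- s]; rewrite -lincomb_comb.
have [l Hl] := H x e e0; have [s [c [_ Es]]] := comb_lincomb_uniq l.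
by exists s, c; rewrite -Es.
Qed.

End Lincomb.

End ClosedSpan.

Section Projection.
Variables (R : realType) (V : lmodType R[i]) (ip : V -> V -> R[i]).
Hypothesis Hip : inner_product ip.

Lemma ip_eq0_of_min z y :
  (forall a, sqnorm ip z <= sqnorm ip (z + a *: y)) -> ip z y = 0.
Proof.
move=> Hmin; apply: csq_eq0; have qy := sqnorm_ge0 Hip y.
pose k := (sqnorm ip y + 1)^-1.
have k0 : 0 < k by rewrite invr_gt0; lra.
have kq : k * sqnorm ip y < 1 by rewrite mulrC ltr_pdivrMr; lra.
(* test the minimality against [a = - k <z, y>] *)
move: (Hmin (Complex (- k * complex.Re (ip z y)) (- k * complex.Im (ip z y)))).
rewrite (sqnormDZ Hip); have := csq_ge0 (ip z y).
case: (ip z y) => p1 p2; rewrite !csqE; simpc => /= S0 Hq.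
have : k * (p1 ^+ 2 + p2 ^+ 2) * (2 - k * sqnorm ip y) <= 0 by nra.
by rewrite pmulr_lle0 ?pmulr_rle0; lra.
Qed.

Lemma sqnorm_sub_le_near_min u y1 y2 (d e1 e2 : R) :
  0 <= d -> 0 <= e1 <= 1 -> 0 <= e2 <= 1 ->
  hnorm ip (u - y1) <= d + e1 -> hnorm ip (u - y2) <= d + e2 ->
  d <= hnorm ip (u - (2^-1 : R[i]) *: (y1 + y2)) ->
  sqnorm ip (y1 - y2) <= (4 * d + 2) * (e1 + e2).
Proof.
move=> d0 /andP[e10 e11] /andP[e20 e21] H1 H2 Hmid.
have := parallelogram Hip (u - y1) (u - y2).
have -> : u - y1 - (u - y2) = - (y1 - y2) by rewrite opprB addrC addrA subrK opprB.
have -> : u - y1 + (u - y2) = 2%:R *: (u - (2^-1 : R[i]) *: (y1 + y2)).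
  by rewrite scalerBr scalerA mulfV ?pnatr_eq0 // scale1r scaler_nat mulr2n opprD addrACA.
rewrite (sqnormN Hip) (sqnormZ Hip).
have -> : csq (2%:R : R[i]) = 2 ^+ 2 by rewrite -(rmorph_nat (real_complex R)) csqR.
rewrite -!(hnorm_sqr Hip).
have le_sqr (a b : R) : 0 <= a -> a <= b -> a ^+ 2 <= b ^+ 2.
  by move=> a0 ab; rewrite ler_sqr ?nnegrE //; apply: le_trans ab.
have := le_sqr _ _ d0 Hmid.
have := le_sqr _ _ (hnorm_ge0 ip _) H1; have := le_sqr _ _ (hnorm_ge0 ip _) H2.
nra.
Qed.

Lemma hcauchy_of_sqnorm_le (y : nat -> V) (K : R) : 0 < K ->
  (forall n m, sqnorm ip (y n - y m) <= K * (n.+1%:R^-1 + m.+1%:R^-1)) ->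
  forall e, 0 < e ->
    exists N, forall m n, (N <= m)%N -> (N <= n)%N -> hnorm ip (y m - y n) < e.
Proof.
move=> K0 Hy e e0; have K2 : 0 < 2 * K by lra.
have [N HN] := invSn_lt (divr_gt0 (exprn_gt0 2 e0) K2).
exists N => m n Hm Hn; rewrite (hnorm_lt Hip) //; apply: le_lt_trans (Hy m n) _.
have : m.+1%:R^-1 < e ^+ 2 / (2 * K) := HN m Hm.
have : n.+1%:R^-1 < e ^+ 2 / (2 * K) := HN n Hn.
rewrite !ltr_pdivlMr //; move: (m.+1%:R^-1 : R) (n.+1%:R^-1 : R) => a b; lra.
Qed.

Variables (I : Type) (h : I -> V) (u : V).

Definition span_dist : R :=
  inf [set hnorm ip (u - comb h l) | l in [set: seq (R[i] * I)]].

Lemma has_inf_span_dist :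
  has_inf [set hnorm ip (u - comb h l) | l in [set: seq (R[i] * I)]].
Proof.
split; first by exists (hnorm ip (u - comb h [::])), [::].
by exists 0 => _ [l _ <-]; apply: hnorm_ge0.
Qed.

Lemma span_dist_ge0 : 0 <= span_dist.
Proof.
apply: lb_le_inf; first by exists (hnorm ip (u - comb h [::])), [::].
by move=> _ [l _ <-]; apply: hnorm_ge0.
Qed.

Lemma span_dist_approx e : 0 < e ->
  exists l, hnorm ip (u - comb h l) < span_dist + e.
Proof. by move=> e0; have [_ [l _ <-]] := inf_adherent e0 has_inf_span_dist; exists l. Qed.

Lemma span_dist_le z : closed_span ip h z -> span_dist <= hnorm ip (u - z).
Proof.
move=> Hz; apply/ler_addgt0Pr => e e0; have [l Hl] := Hz e e0.
apply: le_trans (ge_inf (proj2 has_inf_span_dist) _) _; first by exists l.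
have -> : u - comb h l = (u - z) + (z - comb h l) by rewrite addrA subrK.
by apply: le_trans (le_hnormD Hip _ _) _; rewrite lerD2l ltW.
Qed.

Hypothesis Hc : hcomplete ip.

Lemma exists_closest_point :
  exists2 w, closed_span ip h w & hnorm ip (u - w) <= span_dist.
Proof.
pose eps (n : nat) : R := n.+1%:R^-1.
have eps_gt0 n : 0 < eps n by rewrite invr_gt0 ltr0n.
have eps_le1 n : eps n <= 1 by rewrite invr_le1 ?ler1n ?unitfE ?pnatr_eq0.
have [L HL] := choice (fun n => span_dist_approx (eps_gt0 n)).
pose y n := comb h (L n); have d0 := span_dist_ge0.
have K0 : 0 < 4 * span_dist + 2 by lra.
have Hy n m : sqnorm ip (y n - y m) <= (4 * span_dist + 2) * (eps n + eps m).
  apply: (sqnorm_sub_le_near_min (u := u)) => //;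
    rewrite ?(ltW (eps_gt0 _)) ?eps_le1 ?(ltW (HL _)) //.
  rewrite -comb_cat combZ; apply: span_dist_le; exact: closed_span_comb.
have [w Hw] := Hc (hcauchy_of_sqnorm_le K0 Hy).
exists w.
  apply: closed_span_approx => // e e0; have [N HN] := Hw e e0.
  by exists (y N); [exact: closed_span_comb | rewrite (hdistC Hip); apply: HN].
apply/ler_addgt0Pr => e e0; have e2 : 0 < e / 2 by lra.
have [N1 HN1] := Hw _ e2; have [N2 HN2] := invSn_lt e2.
pose n := maxn N1 N2; have := HN1 n (leq_maxl _ _); have := HN2 n (leq_maxr _ _).
have := HL n; have -> : u - w = (u - y n) + (y n - w) by rewrite addrA subrK.
have := le_hnormD Hip (u - y n) (y n - w); rewrite -/(eps n); lra.
Qed.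

Lemma exists_orthogonal_projection :
  exists2 w, closed_span ip h w & forall i, ip (u - w) (h i) = 0.
Proof.
have [w Hw Hmin] := exists_closest_point; exists w => // i.
apply: ip_eq0_of_min => a; rewrite -!(hnorm_sqr Hip) ler_sqr ?nnegrE ?hnorm_ge0 //.
apply: le_trans Hmin _.
have -> : u - w + a *: h i = u - (w + (- a) *: h i).
  by rewrite scaleNr opprD opprK addrA.
by apply: span_dist_le; apply: closed_spanD => //; apply: closed_spanZ => //; exact: closed_span_gen.
Qed.

End Projection.

(** * Gram-Schmidt orthonormalisation *)

Section GramSchmidt.
Variables (R : realType) (V : lmodType R[i]) (ip : V -> V -> R[i]).
Hypothesis Hip : inner_product ip.

Definition orthonormal (r : nat) (e : nat -> V) : Prop :=
  forall i j, (i < r)%N -> (j < r)%N -> ip (e i) (e j) = (i == j)%:R.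

Definition fin_span (r : nat) (e : nat -> V) (x : V) : Prop :=
  exists c : nat -> R[i], x = \sum_(k < r) c k *: e k.

Definition extend_seq (r : nat) (e : nat -> V) (v : V) (k : nat) : V :=
  if k == r then v else e k.

Lemma extend_seq_lt r e v k : (k < r)%N -> extend_seq r e v k = e k.
Proof. by move=> kr; rewrite /extend_seq ltn_eqF. Qed.

Lemma ip_residual r e p i : orthonormal r e -> (i < r)%N ->
  ip (p - \sum_(k < r) ip p (e k) *: e k) (e i) = 0.
Proof.
move=> Ho ir; rewrite (ipBl Hip) (ip_suml Hip).
rewrite (bigD1 (Ordinal ir)) //= (ipZl Hip) Ho // eqxx /= mulr1n mulr1 big1 ?addr0 ?subrr //.
move=> k kn; rewrite (ipZl Hip) Ho // (_ : (k == i :> nat) = false) /= ?mulr0n ?mulr0 //.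
by apply: contraNF kn => /eqP ki; apply/eqP/val_inj.
Qed.

Lemma orthonormal_extend r e v : orthonormal r e ->
  (forall i, (i < r)%N -> ip v (e i) = 0) -> sqnorm ip v = 1 ->
  orthonormal r.+1 (extend_seq r e v).
Proof.
move=> Ho Hv v1 i j; rewrite !ltnS /extend_seq.
move=> /[1!leq_eqVlt] /predU1P[->|ir] /[1!leq_eqVlt] /predU1P[->|jr];
  rewrite ?eqxx ?(ltn_eqF ir) ?(ltn_eqF jr) /=.
- by rewrite mulr1n (ipxx Hip) v1.
- by rewrite Hv // eq_sym ltn_eqF.
- by rewrite (ipC Hip) Hv // conjc0.
- exact: Ho.
Qed.

Lemma fin_span_extend r e v x :
  fin_span r e x -> fin_span r.+1 (extend_seq r e v) x.
Proof.
case=> c ->; exists (fun k => if (k < r)%N then c k else 0).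
rewrite big_ord_recr /= ltnn scale0r addr0.
by apply: eq_bigr => k _; rewrite ltn_ord extend_seq_lt.
Qed.

Lemma gram_schmidt (J : Type) (z : J -> V) (ps : seq V) :
  (forall p j, p \in ps -> ip p (z j) = 0) ->
  exists r e, [/\ orthonormal r e,
    (forall i j, (i < r)%N -> ip (e i) (z j) = 0) &
    (forall p, p \in ps -> fin_span r e p)].
Proof.
elim: ps => [|p ps IH] Hps; first by exists 0%N, (fun=> 0).
have [|r [e [Ho Hz Hs]]] := IH; first by move=> q j qs; apply: Hps; rewrite inE qs orbT.
pose v := p - \sum_(k < r) ip p (e k) *: e k.
have Hvz j : ip v (z j) = 0.
  rewrite (ipBl Hip) (ip_suml Hip) big1 ?subr0 ?Hps ?mem_head // => k _.
  by rewrite (ipZl Hip) Hz // mulr0.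
have [v0|v0] := eqVneq v 0.
  exists r, e; split => // q; rewrite inE => /predU1P[->|/Hs //].
  by exists (fun k => ip p (e k)); apply: subr0_eq.
pose n := hnorm ip v.
have n0 : 0 < n.
  by rewrite lt0r hnorm_ge0 andbT; apply: contra v0 => /eqP/(hnorm_eq0 Hip) ->.
exists r.+1, (extend_seq r e ((n^-1)%:C *: v)); split.
- apply: orthonormal_extend => // [i ir|]; first by rewrite (ipZl Hip) ip_residual // mulr0.
  by rewrite (sqnormZ Hip) csqR -(hnorm_sqr Hip) -/n exprVn mulVf // expf_neq0 // lt0r_neq0.
- move=> i j; rewrite ltnS => /[1!leq_eqVlt] /predU1P[->|ir].
    by rewrite /extend_seq eqxx (ipZl Hip) Hvz mulr0.
  by rewrite extend_seq_lt // Hz.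
move=> q; rewrite inE => /predU1P[->|/Hs]; last exact: fin_span_extend.
exists (fun k => if (k < r)%N then ip p (e k) else n%:C).
rewrite big_ord_recr /= ltnn /extend_seq eqxx scalerA -rmorphM mulfV ?lt0r_neq0 //.
rewrite scale1r -[LHS](subrK (\sum_(k < r) ip p (e k) *: e k)) addrC -/v.
by congr (_ + _); apply: eq_bigr => k _; rewrite ltn_ord ltn_eqF.
Qed.

End GramSchmidt.

(** * Riesz sequences, frames and finite perturbations *)

Section RieszFrames.
Variables (R : realType) (V : lmodType R[i]) (ip : V -> V -> R[i]).
Hypothesis Hip : inner_product ip.

Lemma ip_lincombr (I : choiceType) (F : I -> V) s c x :
  ip x (lincomb F s c) = \sum_(i <- s) conjc (c i) * ip x (F i).
Proof. by rewrite /lincomb (ip_sumr Hip); apply: eq_bigr => i _; rewrite (ipZr Hip). Qed.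

Section RieszBounds.
Variables (I : choiceType) (F : I -> V).

Definition riesz_bounds (a b : R) : Prop :=
  forall s c, uniq s ->
    a * \sum_(i <- s) csq (c i) <= sqnorm ip (lincomb F s c) /\
    sqnorm ip (lincomb F s c) <= b * \sum_(i <- s) csq (c i).

Lemma riesz_sequenceP :
  riesz_sequence ip F <-> exists a b, [/\ 0 < a, 0 < b & riesz_bounds a b].
Proof.
by split=> -[a [b [a0 b0 H]]]; exists a, b; split=> // s c us;
  have := H s c us; rewrite (hnorm_sqr Hip).
Qed.

Lemma bessel_seq_of_riesz_upper (b : R) : 0 <= b ->
  (forall s c, uniq s -> sqnorm ip (lincomb F s c) <= b * \sum_(i <- s) csq (c i)) ->
  forall x s, uniq s -> \sum_(i <- s) csq (ip x (F i)) <= b * sqnorm ip x.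
Proof.
move=> b0 Hb x s us; set S := \sum_(i <- s) _.
have S0 : 0 <= S by apply: sumr_ge0 => i _; apply: csq_ge0.
(* test against [z = sum_i <x, F_i> F_i], for which [Re <x, z> = S] *)
pose z := lincomb F s (fun i => ip x (F i)).
have ReS : complex.Re (ip x z) = S.
  by rewrite ip_lincombr raddf_sum /=; apply: eq_bigr => i _; rewrite Re_conjM_self.
have : S ^+ 2 <= sqnorm ip x * (b * S).
  rewrite -{1}ReS; apply: le_trans (Re_sqr_le_csq _) _.
  apply: le_trans (cauchy_schwarz Hip _ _) _.
  by apply: ler_wpM2l; [exact: sqnorm_ge0 Hip x | exact: Hb].
have Qx := sqnorm_ge0 Hip x; rewrite le_eqVlt in S0.
case/predU1P: S0 => [<-|S_gt0]; first by rewrite mulr_ge0.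
nra.
Qed.

Lemma lincomb_lower_frame (a : R) s c : 0 < a ->
  a * \sum_(i <- s) csq (c i) <= sqnorm ip (lincomb F s c) ->
  a * sqnorm ip (lincomb F s c) <= \sum_(i <- s) csq (ip (lincomb F s c) (F i)).
Proof.
move=> a0 Ha; set y := lincomb F s c in Ha *.
have Ey : sqnorm ip y = \sum_(i <- s) complex.Re (conjc (c i) * ip y (F i)).
  by rewrite /sqnorm {2}/y ip_lincombr raddf_sum.
have : 2 * a * sqnorm ip y <=
    a ^+ 2 * \sum_(i <- s) csq (c i) + \sum_(i <- s) csq (ip y (F i)).
  rewrite Ey !mulr_sumr -big_split /=.
  by apply: ler_sum => i _; apply: Re_conjM_le.
have : a ^+ 2 * \sum_(i <- s) csq (c i) <= a * sqnorm ip y.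
  by rewrite expr2 -mulrA; apply: ler_wpM2l => //; apply: ltW.
lra.
Qed.

Lemma riesz_lower_approx (a b : R) x s c : 0 < a -> 0 <= b -> uniq s ->
  riesz_bounds a b ->
  a / 4 * sqnorm ip x <=
    \sum_(i <- s) csq (ip x (F i)) + (b + a / 2) * sqnorm ip (x - lincomb F s c).
Proof.
move=> a0 b0 us Hab; set y := lincomb F s c.
have Hy := lincomb_lower_frame a0 (proj1 (Hab s c us)); rewrite -/y in Hy.
have Hyx := bessel_seq_of_riesz_upper b0 (fun s c us => proj2 (Hab s c us)) (y - x) us.
have Hsplit : \sum_(i <- s) csq (ip y (F i)) <=
    2 * \sum_(i <- s) csq (ip x (F i)) + 2 * \sum_(i <- s) csq (ip (y - x) (F i)).
  rewrite !mulr_sumr -big_split /=; apply: ler_sum => i _.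
  by rewrite (_ : ip y (F i) = ip x (F i) + ip (y - x) (F i)) ?csqD_le // -(ipDl Hip) addrC subrK.
have Hx : sqnorm ip x <= 2 * sqnorm ip y + 2 * sqnorm ip (x - y).
  have := parallelogram Hip y (x - y); rewrite (addrC y) subrK.
  by have := sqnorm_ge0 Hip (y - (x - y)); lra.
rewrite -opprB (sqnormN Hip) in Hx *; have := sqnorm_ge0 Hip (y - x).
have := ler_wpM2l (ltW a0) Hx; nra.
Qed.

End RieszBounds.

Lemma riesz_basis_lower_frame (I : choiceType) (F : I -> V) :
  riesz_basis ip F ->
  exists2 A, 0 < A & forall x, ((A * hnorm ip x ^+ 2)%:E <= Defs.coef_sum ip F x)%E.
Proof.
case=> /complete_familyP Hcomp /riesz_sequenceP [a [b [a0 b0 Hab]]].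
exists (a / 4) => [|x]; first exact: divr_gt0.
apply/lee_addgt0Pr => eta eta0; pose K := b + a / 2.
have K0 : 0 < K by rewrite /K; apply: ltr_wpDl; [exact: ltW | exact: divr_gt0].
have e0 : 0 < Num.sqrt (eta / K) by rewrite sqrtr_gt0 divr_gt0.
have [l Hl] := Hcomp x _ e0; have [s [c [us Es]]] := comb_lincomb_uniq F l.
rewrite Es (hnorm_lt Hip) // sqr_sqrtr ?ltW ?divr_gt0 // ltr_pdivlMr // in Hl.
apply: le_trans (leeD2r _ (sum_seq_le_esum (fun i => csq (ip x (F i))) us)).
rewrite -EFinD lee_fin (hnorm_sqr Hip).
have := @riesz_lower_approx _ F a b x s c a0 (ltW b0) us Hab; rewrite -/K; nra.
Qed.

Lemma sqnorm_orthonormal_sum r e (s : seq 'I_r) (d : 'I_r -> R[i]) :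
  orthonormal ip r e -> uniq s ->
  sqnorm ip (\sum_(k <- s) d k *: e k) = \sum_(k <- s) csq (d k).
Proof.
move=> Ho; elim: s => [|k s IH] /=; first by rewrite !big_nil (sqnorm0 Hip).
case/andP=> ks us; rewrite !big_cons (sqnormD Hip) (sqnormZ Hip) IH //.
have -> : ip (d k *: e k) (\sum_(j <- s) d j *: e j) = 0.
  rewrite (ipZl Hip) (ip_sumr Hip) big1_seq ?mulr0 // => j /andP[_ js].
  rewrite (ipZr Hip) Ho // (_ : (k == j :> nat) = false) /= ?mulr0 //.
  by apply: contraNF ks => /eqP /val_inj ->.
by rewrite /sqnorm Ho // eqxx /= mulr1 mulr0 addr0.
Qed.

Lemma riesz_sequence_join_orthonormal (I : choiceType) (F : I -> V) r e :
  riesz_sequence ip F -> orthonormal ip r e ->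
  (forall i j, (i < r)%N -> ip (e i) (F j) = 0) ->
  riesz_sequence ip (join_fam F (fun k : 'I_r => e k)).
Proof.
move=> /riesz_sequenceP [a [b [a0 b0 Hab]]] Ho Hz; apply/riesz_sequenceP.
exists (Num.min a 1), (Num.max b 1); split=> [||s c us].
- by rewrite lt_min a0 ltr01.
- by rewrite lt_max b0.
rewrite /lincomb !big_sum_split /=.
set y1 := \sum_(j <- lefts s) c (inl j) *: F j.
set y2 := \sum_(k <- rights s) c (inr k) *: e k.
have orth : ip y1 y2 = 0.
  rewrite (ip_sumr Hip) big1 // => k _; rewrite (ipZr Hip) (ip_suml Hip) big1 ?mulr0 // => j _.
  by rewrite (ipZl Hip) (ipC Hip) Hz // conjc0 mulr0.
have [H1 H2] := Hab _ (fun j => c (inl j)) (uniq_lefts us).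
rewrite (sqnormD Hip) orth /= mulr0 addr0.
rewrite sqnorm_orthonormal_sum ?uniq_rights //.
have S1 : 0 <= \sum_(j <- lefts s) csq (c (inl j)) by apply: sumr_ge0 => *; apply: csq_ge0.
have S2 : 0 <= \sum_(k <- rights s) csq (c (inr k)) by apply: sumr_ge0 => *; apply: csq_ge0.
have m1 : Num.min a 1 <= a by rewrite ge_min lexx.
have m2 : Num.min a 1 <= 1 by rewrite ge_min lexx orbT.
have m3 : b <= Num.max b 1 by rewrite le_max lexx.
have m4 : 1 <= Num.max b 1 by rewrite le_max lexx orbT.
move: m1 m2 m3 m4 H1 H2 S1 S2; rewrite -/y1.
set A := Num.min a 1; set B := Num.max b 1 => m1 m2 m3 m4 H1 H2 S1 S2; split; nra.
Qed.

Lemma frame_closed_span (I : choiceType) (F : I -> V) :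
  hcomplete ip -> frame ip F -> forall x, closed_span ip F x.
Proof.
move=> Hc [A [B [A0 _ HF]]] x.
have [w Hw Hort] := exists_orthogonal_projection Hip F x Hc.
suff -> : x = w by [].
apply/eqP; rewrite -subr_eq0; apply/eqP/(hnorm_eq0 Hip).
have [+ _] := HF (x - w); rewrite /Defs.coef_sum esum1 => [|i _]; last first.
  by rewrite Hort csqR expr0n.
rewrite lee_fin pmulr_rle0 // => H; apply/eqP.
by rewrite -sqrf_eq0 eq_le H sqr_ge0.
Qed.

Lemma coef_sum_le_inj (I J : choiceType) (F : I -> V) (G : J -> V) (phi : I -> J) :
  injective phi -> (forall i, F i = G (phi i)) ->
  forall x, (Defs.coef_sum ip F x <= Defs.coef_sum ip G x)%E.
Proof.
move=> phi_inj FG x; rewrite /Defs.coef_sum; apply: esum_le_of_sum_seq => s us.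
have ums : uniq (map phi s) by rewrite map_inj_uniq.
apply: le_trans (sum_seq_le_esum (fun j => csq (ip x (G j))) ums).
by rewrite big_map (eq_bigr _ (fun i _ => congr1 (fun v => csq (ip x v)) (FG i))).
Qed.

Lemma riesz_sequence_comp_pcancel (I J : choiceType) (G : J -> V)
    (phi : I -> J) (psi : J -> option I) :
  pcancel phi psi -> riesz_sequence ip G -> riesz_sequence ip (G \o phi).
Proof.
move=> phiK [a [b [a0 b0 Hab]]]; exists a, b; split=> // s c us.
pose c' j := if psi j is Some i then c i else 0.
have E1 : lincomb G (map phi s) c' = lincomb (G \o phi) s c.
  by rewrite /lincomb big_map; apply: eq_bigr => i _; rewrite /c' phiK.
have E2 : \sum_(j <- map phi s) csq (c' j) = \sum_(i <- s) csq (c i).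
  by rewrite big_map; apply: eq_bigr => i _; rewrite /c' phiK.
by rewrite -E1 -E2; apply: Hab; rewrite (map_inj_uniq (pcan_inj phiK)).
Qed.

Lemma bessel_join_fin (I : choiceType) (K : finType) (F : I -> V) (g : K -> V) :
  bessel ip F -> bessel ip (join_fam F g).
Proof.
case=> B [B0 HB]; pose C := \sum_k sqnorm ip (g k).
have C0 : 0 <= C by apply: sumr_ge0 => k _; exact: (sqnorm_ge0 Hip).
exists (B + C); split=> [|x]; first by rewrite ltr_wpDr.
apply: esum_le_of_sum_seq => s us; rewrite lee_fin big_sum_split /= (hnorm_sqr Hip) mulrDl.
apply: lerD.
  rewrite -lee_fin -(hnorm_sqr Hip); apply: le_trans (HB x).
  exact: sum_seq_le_esum (uniq_lefts us).
apply: le_trans (_ : \sum_(k <- rights s) sqnorm ip x * sqnorm ip (g k) <= _).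
  by apply: ler_sum => k _; exact: (cauchy_schwarz Hip).
rewrite -mulr_sumr mulrC; apply: ler_wpM2r; first exact: (sqnorm_ge0 Hip).
by apply: ler_sum_uniq (uniq_rights us) => k; exact: (sqnorm_ge0 Hip).
Qed.

Lemma closed_span_join_fin (I : Type) (F : I -> V) r e x y :
  closed_span ip F x -> fin_span r e y ->
  closed_span ip (join_fam F (fun k : 'I_r => e k)) (x + y).
Proof.
move=> Hx [c ->]; apply: closed_spanD => //.
  by apply: closed_span_trans Hx => // i; exact: (closed_span_gen Hip _ (inl i)).
apply: closed_span_sum => // k; apply: closed_spanZ => //.
exact: (closed_span_gen Hip _ (inr k)).
Qed.

Lemma orthonormal_complement (I : Type) (h : I -> V) (us : seq V) :
  hcomplete ip -> exists r e, [/\ orthonormal ip r e,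
    (forall i j, (i < r)%N -> ip (e i) (h j) = 0) &
    (forall u, u \in us -> closed_span ip (join_fam h (fun k : 'I_r => e k)) u)].
Proof.
move=> Hc; have /choice[P HP] : forall u, exists w,
    closed_span ip h w /\ forall i, ip (u - w) (h i) = 0.
  by move=> u; have [w Hw Hort] := exists_orthogonal_projection Hip h u Hc; exists w.
have [|r [e [Ho Hz Hs]]] := gram_schmidt Hip (z := h) (ps := [seq u - P u | u <- us]).
  by move=> _ j /mapP[u _ ->]; case: (HP u).
exists r, e; split=> // u uus; rewrite -(subrK (P u) u) addrC.
by apply: closed_span_join_fin; [case: (HP u) | apply: Hs; apply: map_f].
Qed.

Lemma pseudo_frame_of_pseudo_riesz_basis (f : nat -> V) :
  bessel ip f -> pseudo_riesz_basis ip f -> pseudo_frame ip f.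
Proof.
move=> Hb [sigma [m [g Hrb]]]; exists m, g.
have [A A0 HA] := riesz_basis_lower_frame Hrb.
have [B [B0 HB]] := bessel_join_fin g Hb.
exists A, B; split=> // x; split; last exact: HB.
apply: le_trans (HA x) _.
apply: (@coef_sum_le_inj _ _ _ _ (fun i => match i with
  | inl n => inl (sval n) | inr k => inr k end)) => [[n|k] [n'|k'] //= [] E|[]//].
  by congr inl; apply: val_inj.
by rewrite E.
Qed.

Lemma pseudo_riesz_sequence_of_pseudo_riesz_basis (f : nat -> V) :
  pseudo_riesz_basis ip f -> pseudo_riesz_sequence ip f.
Proof.
case=> sigma [m [g [_ Hrs]]]; exists sigma.
exact: (@riesz_sequence_comp_pcancel _ _ _ inl
  (fun i => if i is inl n then Some n else None) (fun _ => erefl) Hrs).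
Qed.

Lemma pseudo_riesz_basis_of_pseudo_frame (f : nat -> V) : hcomplete ip ->
  pseudo_frame ip f -> pseudo_riesz_sequence ip f -> pseudo_riesz_basis ip f.
Proof.
move=> Hc [m [g Hfr]] [sigma Hrs].
have [r [e [Ho Hz Hus]]] := orthonormal_complement (remove_vecs (sigma := sigma) f)
  ([seq f n | n <- sigma] ++ [seq g k | k <- enum 'I_m]) Hc.
exists sigma, r, (fun k => e k); split; last exact: riesz_sequence_join_orthonormal.
apply/complete_familyP => x.
apply: closed_span_trans (frame_closed_span Hc Hfr x) => // -[n|k] /=.
  have [nsigma|nsigma] := boolP (n \in sigma).
    by apply: Hus; rewrite mem_cat map_f.
  exact: (closed_span_gen Hip _ (inl (exist _ n nsigma))).
by apply: Hus; rewrite mem_cat map_f ?orbT ?mem_enum.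
Qed.

End RieszFrames.

Theorem mainTheorem5 (R : realType) (V : lmodType R[i]) (ip : V -> V -> R[i])
  (Hip : inner_product ip) (Hcomplete : hcomplete ip) (Hsep : hseparable ip)
  (f : nat -> V) (Hbessel : bessel ip f) :
  pseudo_riesz_basis ip f <-> pseudo_frame ip f /\ pseudo_riesz_sequence ip f.
Proof.
split=> [Hrb|[Hfr Hrs]].
  split; first exact: pseudo_frame_of_pseudo_riesz_basis.
  exact: pseudo_riesz_sequence_of_pseudo_riesz_basis.
exact: pseudo_riesz_basis_of_pseudo_frame.
Qed.
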